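(* In the setting described in the context, let $u_1=\min\{x\in[d,v]: f^{2}(x)=d\}$, $\breve u_0'=\max\{x\in[u_1,v]: f^2(x)=d\}$, for $n\ge1$ let $\breve\mu_{m,n}=\min\{x\in[\breve u_0',v]: f^{m+2n}(x)=d\}$, and for $n,k\ge1$ let $\breve\mu'_{m,n,k}=\max\{x\in[\breve\mu_{m,n+1},\breve\mu_{m,n}]: f^{m+2n+2k}(x)=d\}$ (these sets are nonempty). Then for each $n\ge1$ and $k\ge1$, every periodic point of $f$ in $[\breve\mu'_{m,n,k},\breve\mu_{m,n}]$ whose least period is odd has least period $\ge m+2n+2k$.
   Context: Let $I$ be a compact interval and $f:I\to I$ continuous; $f^1=f$, $f^n=f\circ f^{n-1}$. A point $x_0$ is a periodic point of least period $k$ (a period-$k$ point) if $f^k(x_0)=x_0$ and $f^i(x_0)\ne x_0$ for $0<i<k$. Let $m\ge3$ be odd and let $P$ be a periodic orbit of $f$ of least period $m$. Put $e=f^{m-1}(\min P)$. Let $v\in[\min P,e)$ be a point with $f(v)=e$, and let $z\in(v,e)$ be a fixed point of $f$ (such points exist). Define $z_0=\min\{x\in[v,z]: f^2(x)=x\}$ and $d=\max\{x\in[\min P,v]: f^2(x)=z_0\}$ (both sets are nonempty). *)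

From Stdlib Require Import Reals Lra Lia Arith.
Open Scope R_scope.

Definition iter (f : R -> R) (n : nat) (x : R) : R := Nat.iter n f x.

Definition least_period (f : R -> R) (k : nat) (x : R) : Prop :=
  (0 < k)%nat /\ iter f k x = x /\ (forall i : nat, (0 < i < k)%nat -> iter f i x <> x).

Definition IsMinOf (S : R -> Prop) (x : R) : Prop := S x /\ forall y, S y -> x <= y.
Definition IsMaxOf (S : R -> Prop) (x : R) : Prop := S x /\ forall y, S y -> y <= x.

Definition continuous_on_interval (f : R -> R) (a b : R) : Prop :=
  forall x, a <= x <= b -> forall eps, 0 < eps -> exists delta, 0 < delta /\
    forall y, a <= y <= b -> Rabs (y - x) < delta -> Rabs (f y - f x) < eps.

(* Write g = f^2.  Since g u1 = d and g d = z0 >= u1, the interval [d, u1] is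
   covered by its own g-image, so whenever the t-th image of an interval
   stretches over [d, u1], some point of it reaches d at every time t + 2j.
   A point y of odd period p in [u0', v] has f^(p+2) y = g y <= d, while at time
   p + 2 the endpoint u0' (if p + 2 <= m + 2n) or mu n (otherwise) sits on f z0
   or z0, above u1.  If p < m + 2n + 2k this yields a solution of f^(m+2n) x = d
   in [u0', y] or of f^(m+2n+2k) x = d in [y, mu n], which by the extremality of
   mu n or mu' n k must be y itself.  But an orbit of odd period that meets d
   passes through the 2-cycle of z0, hence contains z0 > v. *)
From Stdlib Require Import Reals Lra Lia Arith.
Open Scope R_scope.

Lemma iter_add f p q x : iter f (p + q) x = iter f p (iter f q x).
Proof. apply Nat.iter_add. Qed.

Lemma iter_mul_periodic f q x c : iter f q x = x -> iter f (q * c) x = x.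
Proof.
  intros Hq; induction c as [|c IH]; [now rewrite Nat.mul_0_r|].
  now rewrite Nat.mul_succ_r, Nat.add_comm, iter_add, IH, Hq.
Qed.

Lemma iter_orbit_periodic f m p0 i :
  iter f m p0 = p0 -> iter f m (iter f i p0) = iter f i p0.
Proof. intros Hm; now rewrite <- iter_add, Nat.add_comm, iter_add, Hm. Qed.

Lemma iter_two_of_last_orbit_preimage f m q v :
  (1 <= m)%nat -> iter f m q = q -> f v = iter f (m - 1) q -> iter f 2 v = q.
Proof.
  intros Hm Hq Hv; change (f (f v) = q); rewrite Hv.
  change (iter f (S (m - 1)) q = q); now replace (S (m - 1)) with m by lia.
Qed.

Lemma iter_even_into_2cycle f d z0 j :
  iter f 2 d = z0 -> iter f 2 z0 = z0 -> iter f (2 * j + 2) d = z0.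
Proof.
  intros Hd Hz; rewrite iter_add, Hd.
  now apply iter_mul_periodic.
Qed.

(* y = f^(p r) y = f^((p - 1) r) w, and (p - 1) r is even. *)
Lemma odd_periodic_orbit_meets_2cycle f p y w r :
  iter f p y = y -> Nat.Odd p -> iter f 2 w = w -> iter f r y = w -> y = w.
Proof.
  intros Hp [h ->] Hw Hr.
  rewrite <- (iter_mul_periodic f _ y r Hp).
  replace ((2 * h + 1) * r)%nat with (2 * (h * r) + r)%nat by lia.
  now rewrite iter_add, Hr, iter_mul_periodic.
Qed.

Lemma odd_period_orbit_not_2periodic f m p0 i :
  least_period f m p0 -> Nat.Odd m -> (1 < m)%nat ->
  iter f 2 (iter f i p0) <> iter f i p0.
Proof.
  intros [_ [Hm Hmin]] Hodd Hm1 H2.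
  assert (Hp0 : p0 = iter f i p0)
    by exact (odd_periodic_orbit_meets_2cycle f m p0 _ i Hm Hodd H2 eq_refl).
  assert (Hfix : f (iter f i p0) = iter f i p0).
  { destruct Hodd as [h Hh]. pose proof (iter_orbit_periodic f m p0 i Hm) as Hq.
    now rewrite Hh, Nat.add_comm, iter_add, iter_mul_periodic in Hq. }
  rewrite <- Hp0 in Hfix.
  apply (Hmin 1%nat); [lia|exact Hfix].
Qed.

Definition clamp a b x := Rmax a (Rmin b x).

Lemma clamp_in a b x : a <= b -> a <= clamp a b x <= b.
Proof.
  intros; unfold clamp, Rmax, Rmin.
  repeat destruct Rle_dec; lra.
Qed.

Lemma clamp_id a b x : a <= x <= b -> clamp a b x = x.
Proof.
  intros; unfold clamp, Rmax, Rmin.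
  repeat destruct Rle_dec; lra.
Qed.

Lemma clamp_lipschitz a b x y : a <= b ->
  Rabs (clamp a b x - clamp a b y) <= Rabs (x - y).
Proof.
  intros; unfold clamp, Rmax, Rmin, Rabs.
  repeat destruct Rle_dec; repeat destruct Rcase_abs; lra.
Qed.

Lemma continuous_on_interval_sub F a b a' b' :
  a <= a' -> b' <= b -> continuous_on_interval F a b -> continuous_on_interval F a' b'.
Proof.
  intros Ha Hb HF x Hx eps Heps.
  destruct (HF x ltac:(lra) eps Heps) as [del [Hdel Hd]].
  exists del; split; [exact Hdel|]. intros y Hy; apply Hd; lra.
Qed.

Lemma continuous_on_interval_sub_id F a b :
  continuous_on_interval F a b -> continuous_on_interval (fun x => F x - x) a b.
Proof.
  intros HF x Hx eps Heps.
  destruct (HF x Hx (eps / 2) ltac:(lra)) as [del [Hdel Hd]].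
  exists (Rmin del (eps / 2)); split; [now apply Rmin_pos; lra|].
  intros y Hy Hyx.
  pose proof (Rmin_l del (eps / 2)); pose proof (Rmin_r del (eps / 2)).
  specialize (Hd y Hy ltac:(lra)).
  replace (F y - y - (F x - x)) with ((F y - F x) + - (y - x)) by ring.
  pose proof (Rabs_triang (F y - F x) (- (y - x))); rewrite Rabs_Ropp in *; lra.
Qed.

(* The Stdlib IVT needs continuity on all of R; clamping extends F from [a, b]. *)
Lemma continuity_clamp_comp F a b :
  a <= b -> continuous_on_interval F a b -> continuity (fun x => F (clamp a b x)).
Proof.
  intros Hab HF x0 eps Heps.
  destruct (HF _ (clamp_in a b x0 Hab) eps Heps) as [del [Hdel Hd]].
  exists del; split; [exact Hdel|]. intros x [_ Hx]; simpl in *; unfold R_dist in *.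
  apply Hd; [now apply clamp_in|].
  eapply Rle_lt_trans; [apply clamp_lipschitz|]; assumption.
Qed.

Lemma ivt_interval F a b x1 x2 c :
  continuous_on_interval F a b -> a <= x1 <= b -> a <= x2 <= b -> F x1 <= c <= F x2 ->
  exists x, a <= x <= b /\ F x = c.
Proof.
  intros HF H1 H2 Hc.
  set (G := fun x => F (clamp a b x) - c).
  assert (HG : continuity G).
  { apply continuity_minus; [apply continuity_clamp_comp; [lra|exact HF]|].
    apply continuity_const; now intros ? ?. }
  assert (HG12 : G x1 * G x2 <= 0)
    by (unfold G; rewrite !clamp_id by assumption; nra).
  destruct (Rle_dec x1 x2) as [Hle|Hlt].
  - destruct (IVT_cor G x1 x2 HG Hle HG12) as [x [Hx Gx]].
    exists x; split; [lra|]. unfold G in Gx; rewrite clamp_id in Gx; lra.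
  - destruct (IVT_cor G x2 x1 HG ltac:(lra) ltac:(lra)) as [x [Hx Gx]].
    exists x; split; [lra|]. unfold G in Gx; rewrite clamp_id in Gx; lra.
Qed.

Lemma le_after_last_level F al be c r :
  continuous_on_interval F al be ->
  IsMaxOf (fun x => al <= x <= be /\ F x = c) r -> F be <= c ->
  forall x, r <= x <= be -> F x <= c.
Proof.
  intros HF [[Hr _] Hmax] Hbe x Hx.
  destruct (Rle_dec (F x) c) as [Hle|Hgt]; [exact Hle|exfalso].
  destruct (ivt_interval F x be be x c) as [w [Hw Fw]]; try lra.
  - apply (continuous_on_interval_sub F al be); [lra|lra|exact HF].
  - assert (w <= r) by (apply Hmax; split; [lra|exact Fw]).
    assert (w = x) by lra; subst w; lra.
Qed.

Section Interval_map.

Variables (f : R -> R) (a b : R).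
Hypothesis Hcont : continuous_on_interval f a b.
Hypothesis Hmaps : forall x, a <= x <= b -> a <= f x <= b.

Lemma iter_maps t x : a <= x <= b -> a <= iter f t x <= b.
Proof. intros Hx; induction t as [|t IH]; [exact Hx|]. now apply Hmaps. Qed.

Lemma iter_continuous t : continuous_on_interval (iter f t) a b.
Proof.
  induction t as [|t IH]; intros x Hx eps Heps.
  - exists eps; split; [exact Heps|]. now intros y _ Hy.
  - destruct (Hcont (iter f t x) (iter_maps t x Hx) eps Heps) as [d1 [Hd1 H1]].
    destruct (IH x Hx d1 Hd1) as [d2 [Hd2 H2]].
    exists d2; split; [exact Hd2|]. intros y Hy Hyx.
    apply H1; [now apply iter_maps|]. now apply H2.
Qed.

Lemma iter_ivt t al be x1 x2 c :
  a <= al -> be <= b -> al <= x1 <= be -> al <= x2 <= be ->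
  iter f t x1 <= c <= iter f t x2 -> exists x, al <= x <= be /\ iter f t x = c.
Proof.
  intros Hal Hbe H1 H2 Hc.
  apply (ivt_interval _ al be x1 x2); try assumption.
  apply (continuous_on_interval_sub _ a b); [lra|lra|apply iter_continuous].
Qed.

Lemma first_2periodic_point_le_f v z z0 :
  a <= v -> z <= b -> v <= f v ->
  IsMinOf (fun x => v <= x <= z /\ iter f 2 x = x) z0 -> z0 <= f z0.
Proof.
  intros Hv Hz Hfv [[Hz0 Hgz0] Hmin].
  destruct (Rle_dec z0 (f z0)) as [Hle|Hgt]; [exact Hle|exfalso].
  destruct (ivt_interval (fun x => f x - x) v z0 z0 v 0) as [w [Hw Fw]]; try lra.
  { apply continuous_on_interval_sub_id, (continuous_on_interval_sub f a b); [lra|lra|exact Hcont]. }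
  assert (Hfw : f w = w) by lra.
  assert (z0 <= w)
    by (apply Hmin; split; [lra|change (f (f w) = w); now rewrite !Hfw]).
  assert (w = z0) by lra; subst w; lra.
Qed.

Variables (d u z0 : R).
Hypotheses (Hdu : d <= u) (Huz : u <= z0) (Hz0f : z0 <= f z0).
Hypotheses (Hgu : iter f 2 u = d) (Hgd : iter f 2 d = z0) (Hgz : iter f 2 z0 = z0).

Lemma iter_hits_d_of_cover j t al be x1 x2 :
  a <= al -> be <= b -> al <= x1 <= be -> al <= x2 <= be ->
  iter f t x1 <= d -> u <= iter f t x2 ->
  exists x, al <= x <= be /\ iter f (t + 2 * j) x = d.
Proof.
  revert t x1 x2; induction j as [|j IH]; intros t x1 x2 Hal Hbe H1 H2 F1 F2.
  - rewrite Nat.add_0_r. apply (iter_ivt t al be x1 x2); try assumption; lra.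
  - destruct (iter_ivt t al be x1 x2 u) as [x3 [H3 F3]]; try assumption; [lra|].
    destruct (iter_ivt t al be x1 x2 d) as [x4 [H4 F4]]; try assumption; [lra|].
    replace (t + 2 * S j)%nat with (2 + t + 2 * j)%nat by lia.
    apply (IH (2 + t)%nat x3 x4); try assumption; rewrite iter_add.
    + rewrite F3, Hgu; lra.
    + rewrite F4, Hgd; lra.
Qed.

Lemma hit_d_left_of_short_odd_cycle al y p N :
  a <= al -> y <= b -> al <= y -> iter f 2 al = d ->
  iter f p y = y -> Nat.Odd p -> (3 <= p)%nat -> iter f 2 y <= d ->
  (p + 2 <= N)%nat -> Nat.Odd N ->
  exists x, al <= x <= y /\ iter f N x = d.
Proof.
  intros Hal Hy Haly Hgal Hpy [h ->] Hp3 Hgy HpN [hN ->].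
  assert (Hcover : u <= iter f (2 * h + 1 + 2) al).
  { replace (2 * h + 1 + 2)%nat with (1 + (2 * (h - 1) + 2) + 2)%nat by lia.
    rewrite iter_add, Hgal, iter_add, (iter_even_into_2cycle f d z0) by assumption; simpl; lra. }
  destruct (iter_hits_d_of_cover (hN - h - 1) (2 * h + 1 + 2) al y y al)
    as [x [Hx Fx]]; try lra.
  - rewrite Nat.add_comm, iter_add, Hpy; lra.
  - exists x; split; [exact Hx|].
    now replace (2 * hN + 1)%nat with (2 * h + 1 + 2 + 2 * (hN - h - 1))%nat by lia.
Qed.

Lemma hit_d_right_of_odd_cycle y be p M N :
  a <= y -> be <= b -> y <= be -> iter f M be = d ->
  iter f p y = y -> Nat.Odd p -> iter f 2 y <= d ->
  Nat.Odd M -> (M < p + 2 <= N)%nat -> Nat.Odd N ->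
  exists x, y <= x <= be /\ iter f N x = d.
Proof.
  intros Hy Hbe Hybe HMbe Hpy [h ->] Hgy [hM ->] HMpN [hN ->].
  assert (Hcover : u <= iter f (2 * h + 1 + 2) be).
  { replace (2 * h + 1 + 2)%nat with ((2 * (h - hM) + 2) + (2 * hM + 1))%nat by lia.
    rewrite iter_add, HMbe, (iter_even_into_2cycle f d z0) by assumption; lra. }
  destruct (iter_hits_d_of_cover (hN - h - 1) (2 * h + 1 + 2) y be y be)
    as [x [Hx Fx]]; try lra.
  - rewrite Nat.add_comm, iter_add, Hpy; lra.
  - exists x; split; [exact Hx|].
    now replace (2 * hN + 1)%nat with (2 * h + 1 + 2 + 2 * (hN - h - 1))%nat by lia.
Qed.

Lemma odd_cycle_avoids_d y p s :
  y <> z0 -> iter f p y = y -> Nat.Odd p -> iter f s y <> d.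
Proof.
  intros Hyz Hpy Hp Hs; apply Hyz.
  apply (odd_periodic_orbit_meets_2cycle f p y z0 (s + 2)); try assumption.
  now rewrite Nat.add_comm, iter_add, Hs.
Qed.

Lemma hit_d_near_short_odd_cycle al y be p M K :
  a <= al -> al <= y <= be -> be <= b -> iter f 2 al = d -> iter f M be = d ->
  iter f p y = y -> Nat.Odd p -> (3 <= p)%nat -> iter f 2 y <= d ->
  Nat.Odd M -> (p < M + 2 * K)%nat ->
  (exists x, al <= x <= y /\ iter f M x = d) \/
  (exists x, y <= x <= be /\ iter f (M + 2 * K) x = d).
Proof.
  intros Hal Hy Hbe Hgal HMbe Hpy Hp Hp3 Hgy HM HpMK.
  assert (HMK : Nat.Odd (M + 2 * K))
    by (destruct HM as [hM ->]; exists (hM + K)%nat; lia).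
  destruct Hp as [h ->], (le_lt_dec (2 * h + 1 + 2) M) as [Hshort|Hlong].
  - left; apply (hit_d_left_of_short_odd_cycle al y (2 * h + 1)); try assumption; try lra.
    now exists h.
  - right; apply (hit_d_right_of_odd_cycle y be (2 * h + 1) M); try assumption; try lra.
    + now exists h.
    + destruct HM as [hM ->]; lia.
Qed.

Lemma odd_period_ge_between_extremal_hits al y be p M K :
  a <= al -> al <= y <= be -> be <= b -> d <= y -> y <> z0 ->
  iter f 2 al = d -> iter f M be = d -> Nat.Odd M ->
  iter f p y = y -> Nat.Odd p -> iter f 2 y <= d ->
  (forall x, al <= x <= y -> iter f M x = d -> y <= x) ->
  (forall x, y <= x <= be -> iter f (M + 2 * K) x = d -> x <= y) ->
  (M + 2 * K <= p)%nat.
Proof.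
  intros Hal Hy Hbe Hdy Hyz Hgal HMbe HM Hpy Hp Hgy Hleft Hright.
  pose proof (fun s => odd_cycle_avoids_d y p s Hyz Hpy Hp) as Havoid.
  assert (Hp1 : p <> 1%nat).
  { intros ->; change (f y = y) in Hpy.
    assert (iter f 2 y = y) by (change (f (f y) = y); now rewrite !Hpy).
    apply (Havoid 0%nat); simpl; lra. }
  assert (Hp3 : (3 <= p)%nat) by (destruct Hp as [h ->]; lia).
  destruct (le_lt_dec (M + 2 * K) p) as [Hle|Hlt]; [exact Hle|exfalso].
  destruct (hit_d_near_short_odd_cycle al y be p M K)
    as [[x [Hx Fx]]|[x [Hx Fx]]]; try assumption.
  - assert (x = y) as <- by (pose proof (Hleft x Hx Fx); lra).
    exact (Havoid M Fx).
  - assert (x = y) as <- by (pose proof (Hright x Hx Fx); lra).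
    exact (Havoid _ Fx).
Qed.

End Interval_map.

Theorem lemma13
  (a b : R) (f : R -> R)
  (Hab : a <= b)
  (Hcont : continuous_on_interval f a b)
  (Hmaps : forall x, a <= x <= b -> a <= f x <= b)
  (m : nat) (Hm3 : (3 <= m)%nat) (Hmodd : Nat.Odd m)
  (p0 : R) (Hp0I : a <= p0 <= b) (Hp0 : least_period f m p0)
  (minP : R) (HminP : IsMinOf (fun x => exists i : nat, x = iter f i p0) minP)
  (e : R) (He : e = iter f (m - 1) minP)
  (v : R) (Hv : minP <= v < e) (Hfv : f v = e)
  (z : R) (Hz : v < z < e) (Hfz : f z = z)
  (z0 : R) (Hz0 : IsMinOf (fun x => v <= x <= z /\ iter f 2 x = x) z0)
  (d : R) (Hd : IsMaxOf (fun x => minP <= x <= v /\ iter f 2 x = z0) d)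
  (u1 : R) (Hu1 : IsMinOf (fun x => d <= x <= v /\ iter f 2 x = d) u1)
  (u0' : R) (Hu0' : IsMaxOf (fun x => u1 <= x <= v /\ iter f 2 x = d) u0')
  (mu : nat -> R)
  (Hmu : forall n : nat, (1 <= n)%nat ->
     IsMinOf (fun x => u0' <= x <= v /\ iter f (m + 2 * n) x = d) (mu n))
  (mu' : nat -> nat -> R)
  (Hmu' : forall n k : nat, (1 <= n)%nat -> (1 <= k)%nat ->
     IsMaxOf (fun x => mu (S n) <= x <= mu n /\ iter f (m + 2 * n + 2 * k) x = d)
             (mu' n k)) :
  forall n k : nat, (1 <= n)%nat -> (1 <= k)%nat ->
  forall (x : R) (p : nat), mu' n k <= x <= mu n ->
    least_period f p x -> Nat.Odd p -> (m + 2 * n + 2 * k <= p)%nat.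
Proof.
  intros n k Hn Hk y p Hy Hlp Hodd.
  destruct HminP as [[i0 Hi0] _].
  pose proof Hz0 as [[Hvz0 Hgz0] _].
  destruct Hd as [[Hd_range Hgd] _], Hu1 as [[Hu1_range Hgu1] _].
  pose proof Hu0' as [[Hu0'_range Hgu0'] _].
  destruct (Hmu n Hn) as [[Hmun Hfmun] Hmun_min], (Hmu (S n) ltac:(lia)) as [[HmuSn _] _].
  destruct (Hmu' n k Hn Hk) as [[Hmu'nk _] Hmu'nk_max].
  pose proof Hlp as [_ [Hpy _]].
  assert (HminP_ab : a <= minP <= b) by (rewrite Hi0; now apply (iter_maps f a b)).
  assert (He_ab : a <= e <= b) by (rewrite He; now apply (iter_maps f a b)).
  assert (Hgv : iter f 2 v = minP).
  { apply (iter_two_of_last_orbit_preimage f m); [lia| |congruence].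
    rewrite Hi0; apply iter_orbit_periodic, Hp0. }
  assert (HgminP : iter f 2 minP <> minP)
    by (rewrite Hi0; apply (odd_period_orbit_not_2periodic f m); [exact Hp0|exact Hmodd|lia]).
  assert (Hv_ne_z0 : v <> z0)
    by (intros E; rewrite E, Hgz0 in Hgv; apply HgminP; rewrite <- Hgv; exact Hgz0).
  assert (Hz0f : z0 <= f z0)
    by (apply (first_2periodic_point_le_f f a b Hcont v z); [lra|lra|lra|exact Hz0]).
  assert (Hg_le_d : forall x, u0' <= x <= v -> iter f 2 x <= d).
  { apply (le_after_last_level _ u1 v d u0'); [|exact Hu0'|lra].
    apply (continuous_on_interval_sub _ a b); [lra|lra|].
    exact (iter_continuous f a b Hcont Hmaps 2). }
  assert (Hmn : Nat.Odd (m + 2 * n)) by (destruct Hmodd as [hm ->]; exists (hm + n)%nat; lia).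
  apply (odd_period_ge_between_extremal_hits f a b Hcont Hmaps d u1 z0 ltac:(lra) ltac:(lra)
           Hz0f Hgu1 Hgd Hgz0 u0' y (mu n)); try (assumption || lra).
  - now apply Hg_le_d; lra.
  - intros x Hx Fx; enough (mu n <= x) by lra.
    apply Hmun_min; split; [lra|exact Fx].
  - intros x Hx Fx; enough (x <= mu' n k) by lra.
    apply Hmu'nk_max; split; [lra|exact Fx].
Qed.
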